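(* Let $G$ be a topological group acting continuously by linear isometries on a Banach space $X$. Suppose that $X$ admits an equivalent strictly convex norm $|\cdot|$. Define $\|x\|':=\sup_{g\in G}|gx|$ for $x\in X$. If this supremum is attained for every $x\in X$, then $\|\cdot\|'$ is a $G$-invariant strictly convex norm on $X$.
   Context: A norm is strictly convex if for every $x\neq y$ with $\|x\|=\|y\|$ one has $\|\frac{x+y}{2}\|<\|x\|$; it is $G$-invariant if $\|gx\|'=\|x\|'$ for all $g\in G$, $x\in X$. *)

From HB Require Import structures.
From mathcomp Require Import all_boot all_order all_algebra.
From mathcomp Require Import all_classical all_reals all_analysis.
Set Implicit Arguments. Unset Strict Implicit. Unset Printing Implicit Defensive.
Import Order.TTheory GRing.Theory Num.Theory.
Local Open Scope classical_set_scope.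
Local Open Scope ring_scope.

Definition is_topological_group (G : topologicalType)
    (mul : G -> G -> G) (inv : G -> G) (one : G) : Prop :=
  [/\ (forall a b c, mul a (mul b c) = mul (mul a b) c),
      (forall a, mul one a = a),
      (forall a, mul (inv a) a = one),
      continuous (fun p : G * G => mul p.1 p.2) &
      continuous inv].

Definition is_continuous_linear_isometric_action (R : realType)
    (G : topologicalType) (mul : G -> G -> G) (one : G)
    (X : normedModType R) (act : G -> X -> X) : Prop :=
  [/\ (forall x, act one x = x),
      (forall g h x, act (mul g h) x = act g (act h x)),
      (forall g (a : R) x y, act g (a *: x + y) = a *: act g x + act g y),
      (forall g x, `|act g x| = `|x|) &
      continuous (fun p : G * X => act p.1 p.2)].

Definition is_norm (R : realType) (X : normedModType R) (n : X -> R) : Prop :=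
  [/\ (forall x, 0 <= n x),
      (forall x, n x = 0 -> x = 0),
      (forall (a : R) x, n (a *: x) = `|a| * n x) &
      (forall x y, n (x + y) <= n x + n y)].

Definition equivalent_norm (R : realType) (X : normedModType R) (n : X -> R) : Prop :=
  is_norm n /\
  exists c C : R, [/\ 0 < c, 0 < C & forall x, c * `|x| <= n x <= C * `|x|].

Definition strictly_convex (R : realType) (X : normedModType R) (n : X -> R) : Prop :=
  forall x y : X, x <> y -> n x = n y -> n (2^-1 *: (x + y)) < n x.

Definition G_invariant (R : realType) (G : Type) (X : normedModType R)
    (act : G -> X -> X) (n : X -> R) : Prop :=
  forall g x, n (act g x) = n x.

Definition sup_orbit_norm (R : realType) (G : Type) (X : normedModType R)
    (act : G -> X -> X) (n : X -> R) : X -> R :=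
  fun x => sup (range (fun g => n (act g x))).

From HB Require Import structures.
From mathcomp Require Import all_boot all_order all_algebra.
From mathcomp Require Import all_classical all_reals all_analysis.
From mathcomp Require Import lra.

Set Implicit Arguments.
Unset Strict Implicit.
Unset Printing Implicit Defensive.
Import Order.TTheory GRing.Theory Num.Theory.
Local Open Scope classical_set_scope.
Local Open Scope ring_scope.

(* ||.||' is a supremum of the norms x |-> |g x|, bounded above by C ||x||
   since g is an isometry.  Right translation by h permutes the orbit of x,
   which gives invariance; attainment turns the supremum into one of these
   norms at each point, which gives homogeneity and the triangle inequality.
   For strict convexity, pick g attaining ||(x + y)/2||': then g x <> g y,
   |g x|, |g y| <= ||x||' = ||y||', and the midpoint of two distinct points
   in the closed ball of a strictly convex norm lies in the open ball. *)

Lemma norm_midpoint_lt (R : realType) (X : normedModType R) (n : X -> R)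
    (a b : X) (s : R) :
  is_norm n -> strictly_convex n -> a <> b -> n a <= s -> n b <= s ->
  n (2^-1 *: (a + b)) < s.
Proof.
move=> [_ _ nZ nD] sc ab nas nbs.
have [nab|nab] := eqVneq (n a) (n b); first exact: lt_le_trans (sc _ _ ab nab) nas.
rewrite nZ ger0_norm ?invr_ge0 //.
have := nD a b; move: nab; rewrite neq_lt => /orP[]; lra.
Qed.

Section SupOrbitNorm.

Variables (R : realType) (G : Type) (mul : G -> G -> G) (inv : G -> G)
  (one : G) (X : normedModType R) (act : G -> X -> X) (n : X -> R) (C : R).

Hypothesis act1 : forall x, act one x = x.
Hypothesis actM : forall g h x, act (mul g h) x = act g (act h x).
Hypothesis mulVg : forall g, mul (inv g) g = one.
Hypothesis act_linear :
  forall g (a : R) x y, act g (a *: x + y) = a *: act g x + act g y.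
Hypothesis act_isometry : forall g x, `|act g x| = `|x|.
Hypothesis n_norm : is_norm n.
Hypothesis n_le : forall x, n x <= C * `|x|.

Local Notation N := (sup_orbit_norm act n).

Lemma act0 g : act g 0 = 0.
Proof. by apply: normr0_eq0; rewrite act_isometry normr0. Qed.

Lemma actZ g (a : R) x : act g (a *: x) = a *: act g x.
Proof. by rewrite -[a *: x]addr0 act_linear act0 addr0. Qed.

Lemma actD g x y : act g (x + y) = act g x + act g y.
Proof. by rewrite -[x]scale1r act_linear !scale1r. Qed.

Lemma act_inj g : injective (act g).
Proof. by move=> x y /(congr1 (act (inv g))); rewrite -!actM mulVg !act1. Qed.

Lemma le_sup_orbit_norm g x : n (act g x) <= N x.
Proof.
apply: (sup_upper_bound (E := range (fun g => n (act g x)))); last by exists g.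
split; first by exists (n (act one x)), one.
by exists (C * `|x|) => _ [h _ <-]; rewrite -(act_isometry h).
Qed.

Lemma sup_orbit_norm_ge x : n x <= N x.
Proof. by rewrite -{1}(act1 x); exact: le_sup_orbit_norm. Qed.

Lemma sup_orbit_norm_act h x : N (act h x) = N x.
Proof.
rewrite /N /sup_orbit_norm; congr sup.
apply/seteqP; split=> _ [g _ <-].
- by exists (mul g h); rewrite // actM.
- by exists (mul g (inv h)); rewrite // actM -(actM (inv h)) mulVg act1.
Qed.

Hypothesis N_attained : forall x, exists g, n (act g x) = N x.

Lemma sup_orbit_norm_is_norm : is_norm N.
Proof.
have [n_ge0 n_eq0 nZ nD] := n_norm.
split.
- by move=> x; apply: le_trans (sup_orbit_norm_ge x).
- move=> x Nx0; apply: n_eq0; apply/eqP.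
  by rewrite eq_le n_ge0 andbT -Nx0 sup_orbit_norm_ge.
- move=> a x; apply/eqP; rewrite eq_le; apply/andP; split.
  + have [g <-] := N_attained (a *: x); rewrite actZ nZ.
    exact/ler_wpM2l/le_sup_orbit_norm.
  + by have [g <-] := N_attained x; rewrite -nZ -actZ le_sup_orbit_norm.
- move=> x y; have [g <-] := N_attained (x + y); rewrite actD.
  by apply: le_trans (nD _ _) _; apply: lerD; apply: le_sup_orbit_norm.
Qed.

Lemma sup_orbit_norm_strictly_convex : strictly_convex n -> strictly_convex N.
Proof.
move=> n_sc x y xy Nxy.
have [g <-] := N_attained (2^-1 *: (x + y)); rewrite actZ actD.
apply: norm_midpoint_lt => //; first by move/act_inj.
- exact: le_sup_orbit_norm.
- by rewrite Nxy le_sup_orbit_norm.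
Qed.

End SupOrbitNorm.

Theorem proposition4p3 (R : realType) (G : topologicalType)
  (mul : G -> G -> G) (inv : G -> G) (one : G)
  (X : completeNormedModType R) (act : G -> X -> X) (n : X -> R) :
  is_topological_group mul inv one ->
  is_continuous_linear_isometric_action mul one act ->
  equivalent_norm n ->
  strictly_convex n ->
  (forall x : X, exists g0 : G, n (act g0 x) = sup_orbit_norm act n x) ->
  [/\ is_norm (sup_orbit_norm act n),
      G_invariant act (sup_orbit_norm act n) &
      strictly_convex (sup_orbit_norm act n)].
Proof.
move=> [_ _ mulVg _ _] [act1 actM act_linear act_isometry _].
move=> [n_norm [c [C [_ _ n_bounds]]]] n_sc N_attained.
have n_le x : n x <= C * `|x| by have /andP[] := n_bounds x.
split.
- exact: (sup_orbit_norm_is_norm act1 act_linear act_isometry n_norm n_le).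
- by move=> h x; apply: sup_orbit_norm_act.
- exact: (sup_orbit_norm_strictly_convex act1 actM mulVg act_linear act_isometry
    n_norm n_le).
Qed.
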